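(* Let $\mathcal{H},\mathcal{K}$ be complex Hilbert spaces and $(f_*,f^* ):(\mathsf{P}(\mathcal{H}),\mathsf{L}(\mathcal{H}),\bar e_{\mathcal{H}})\to(\mathsf{P}(\mathcal{K}),\mathsf{L}(\mathcal{K}),\bar e_{\mathcal{K}})$ a Chu morphism. Then for every nonzero $\psi\in\mathcal{H}$ and every $S\in\mathsf{L}(\mathcal{K})$: $[\psi]\subseteq f^*(S)$ if and only if $f_*([\psi])\subseteq S$.
   Context: A Chu morphism $(X,A,e)\to(X',A',e')$ between Chu spaces over $[0,1]$ is a pair $(f_*:X\to X',f^*:A'\to A)$ with $e(x,f^*(a'))=e'(f_*(x),a')$ for all $x,a'$. For a complex Hilbert space $\mathcal{H}$: $\mathsf{L}(\mathcal{H})$ is the set of closed subspaces, $P_S$ the orthogonal projector onto $S$, $\mathsf{P}(\mathcal{H})$ the set of rays $[\psi]=\{\lambda\psi:\lambda\in\mathbb{C}\}$, $\psi\ne0$, and $\bar e_{\mathcal{H}}([\psi],S)=\|P_S\psi\|^2/\|\psi\|^2$. *)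

From Stdlib Require Import ClassicalEpsilon.
From mathcomp Require Import all_boot all_algebra.
From mathcomp Require Import reals.
From mathcomp.real_closed Require Import complex.
Import GRing.Theory Num.Theory.
Set Implicit Arguments. Unset Strict Implicit. Unset Printing Implicit Defensive.
Local Open Scope ring_scope.

(* A complex Hilbert space: a complex vector space V with an inner product
   (conjugate-linear in the first argument, linear in the second), complete
   for the induced norm. *)
Record hilbert (R : realType) (V : lmodType R[i]) := Hilbert {
  inner : V -> V -> R[i];
  inner_linear : forall (a : R[i]) (x y z : V),
      inner x (a *: y + z) = a * inner x y + inner x z;
  inner_conj : forall x y : V, inner y x = (inner x y)^*;
  inner_ge0 : forall x : V, 0 <= inner x x;
  inner_eq0 : forall x : V, inner x x = 0 -> x = 0;
  inner_complete : forall u : nat -> V,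
      (forall e : R, 0 < e -> exists N, forall m n, (N <= m)%N -> (N <= n)%N ->
          Num.sqrt (complex.Re (inner (u m - u n) (u m - u n))) < e) ->
      exists l : V, forall e : R, 0 < e -> exists N, forall n, (N <= n)%N ->
          Num.sqrt (complex.Re (inner (u n - l) (u n - l))) < e
}.

Section Defs.
Variables (R : realType) (V : lmodType R[i]) (H : hilbert V).

Definition normH (x : V) : R := Num.sqrt (complex.Re (inner H x x)).

Definition converges (u : nat -> V) (l : V) : Prop :=
  forall e : R, 0 < e -> exists N, forall n, (N <= n)%N -> normH (u n - l) < e.

Record csub := CSub {
  cs_set : V -> Prop;
  cs_0 : cs_set 0;
  cs_lin : forall (a : R[i]) (x y : V), cs_set x -> cs_set y -> cs_set (a *: x + y);
  cs_closed : forall (u : nat -> V) (l : V),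
      (forall n, cs_set (u n)) -> converges u l -> cs_set l
}.

Record ray := Ray {
  ray_set : V -> Prop;
  ray_gen : exists psi : V, psi <> 0 /\
      forall v, ray_set v <-> exists l : R[i], v = l *: psi
}.

Definition ray_of (psi : V) (hpsi : psi <> 0) : ray.
Proof.
refine (@Ray (fun v => exists l : R[i], v = l *: psi) _).
by exists psi; split.
Defined.

(* orthogonal projector P_S : the element p of S with psi - p orthogonal to S
   (exists uniquely in a Hilbert space; chosen by Hilbert's epsilon). *)
Definition proj (S : csub) (psi : V) : V :=
  epsilon (inhabits 0)
    (fun p => cs_set S p /\ forall s, cs_set S s -> inner H s (psi - p) = 0).

(* ebar_H([psi], S) = ||P_S psi||^2 / ||psi||^2, computed with a chosen
   nonzero representative of the ray (independent of the choice). *)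
Definition ebar (r : ray) (S : csub) : R :=
  let psi := epsilon (inhabits 0) (fun v => v <> 0 /\ ray_set r v) in
  normH (proj S psi) ^+ 2 / normH psi ^+ 2.

End Defs.

Record chu_morph (R : realType) (V W : lmodType R[i])
    (H : hilbert V) (K : hilbert W) := ChuMorph {
  f_lower : ray V -> ray W;
  f_upper : csub K -> csub H;
  chu_adj : forall (x : ray V) (a : csub K),
      ebar x (f_upper a) = ebar (f_lower x) a
}.

(* A ray [psi] lies in a closed subspace S iff ebar([psi], S) = 1: by Pythagoras
   |psi|^2 = |P_S psi|^2 + |psi - P_S psi|^2, and psi - P_S psi vanishes exactly
   when psi is in S.  The Chu condition ebar([psi], f^* S) = ebar(f_* [psi], S)
   then transfers the inclusion in both directions.  The real work is the
   Hilbert projection theorem behind P_S: a minimising sequence for the distance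
   to S is Cauchy by the parallelogram law, its limit stays in S because S is
   closed, and a minimiser is orthogonal to S by a first-variation argument. *)

From Stdlib Require Import ClassicalEpsilon.
From mathcomp Require Import all_boot all_algebra.
From mathcomp Require Import reals.
From mathcomp.real_closed Require Import complex.
From mathcomp Require Import ring lra.
Import order.Order.TTheory GRing.Theory Num.Theory.
Set Implicit Arguments. Unset Strict Implicit. Unset Printing Implicit Defensive.
Local Open Scope ring_scope.

Section ComplexParts.
Variable R : realType.
Implicit Types x : R[i].

Lemma Re_conj x : complex.Re x^* = complex.Re x.
Proof. by case: x. Qed.

Lemma conj_real (r : R) : ((r%:C)%C : R[i])^* = (r%:C)%C.
Proof. by apply/eqP; rewrite eq_complex /= oppr0 !eqxx. Qed.

Lemma ReN x : complex.Re (- x) = - complex.Re x.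
Proof. by case: x. Qed.

Lemma Re_realM (r : R) x : complex.Re ((r%:C)%C * x) = r * complex.Re x.
Proof. by case: x => a b /=; rewrite mul0r subr0. Qed.

Lemma Re_iM x : complex.Re ('i%C * x) = - complex.Im x.
Proof. by case: x => a b /=; rewrite !mul0r mul1r sub0r. Qed.

Lemma complex_eq0 x : complex.Re x = 0 -> complex.Im x = 0 -> x = 0.
Proof. by case: x => a b /= -> ->. Qed.

End ComplexParts.

Section InnerProduct.
Variables (R : realType) (V : lmodType R[i]) (H : hilbert V).
Local Notation "<< x , y >>" := (inner H x y).
Implicit Types x y z : V.

Lemma innerDr x y z : << x, y + z >> = << x, y >> + << x, z >>.
Proof. by have := inner_linear H 1 x y z; rewrite scale1r mul1r. Qed.

Lemma inner0r x : << x, 0 >> = 0.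
Proof. by apply: (@addIr _ << x, 0 >>); rewrite -innerDr addr0 add0r. Qed.

Lemma innerZr a x y : << x, a *: y >> = a * << x, y >>.
Proof. by have := inner_linear H a x y 0; rewrite !addr0 inner0r addr0. Qed.

Lemma innerNr x y : << x, - y >> = - << x, y >>.
Proof. by rewrite -scaleN1r innerZr mulN1r. Qed.

Lemma innerDl x y z : << y + z, x >> = << y, x >> + << z, x >>.
Proof. by rewrite !(inner_conj H x) innerDr rmorphD. Qed.

Lemma innerZl a x y : << a *: y, x >> = a^* * << y, x >>.
Proof. by rewrite !(inner_conj H x) innerZr rmorphM. Qed.

Lemma Re_inner_sym x y : complex.Re << y, x >> = complex.Re << x, y >>.
Proof. by rewrite inner_conj Re_conj. Qed.

Definition sqnorm x : R := complex.Re << x, x >>.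

Lemma sqnorm_ge0 x : 0 <= sqnorm x.
Proof. by have := inner_ge0 H x; rewrite lecE => /andP[]. Qed.

Lemma sqnorm_eq0 x : sqnorm x = 0 -> x = 0.
Proof.
move=> Qx0; apply: (@inner_eq0 _ _ H); apply: complex_eq0 => //.
by have := inner_ge0 H x; rewrite lecE => /andP[/eqP ->].
Qed.

Lemma normH_sqr x : normH H x ^+ 2 = sqnorm x.
Proof. by rewrite sqr_sqrtr // sqnorm_ge0. Qed.

Lemma sqnormD x y : sqnorm (x + y) = sqnorm x + sqnorm y + 2 * complex.Re << x, y >>.
Proof. by rewrite /sqnorm innerDl !innerDr !raddfD /= (Re_inner_sym x y); ring. Qed.

Lemma sqnormZ (r : R) x : sqnorm ((r%:C)%C *: x) = r ^+ 2 * sqnorm x.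
Proof. by rewrite /sqnorm innerZl innerZr conj_real mulrA -rmorphM Re_realM. Qed.

Lemma sqnormN x : sqnorm (- x) = sqnorm x.
Proof. by rewrite /sqnorm innerNr -(scaleN1r x) innerZl rmorphN1 !mulN1r opprK. Qed.

Lemma sqnorm_parallelogram x y :
  sqnorm (x + y) + sqnorm (x - y) = 2 * sqnorm x + 2 * sqnorm y.
Proof. by rewrite !sqnormD sqnormN innerNr ReN; ring. Qed.

(* Young's inequality 2 Re <x, y> <= t |x|^2 + |y|^2 / t, in disguise. *)
Lemma sqnormD_le (t : R) x y : 0 < t ->
  sqnorm (x + y) <= (1 + t) * sqnorm x + (1 + t^-1) * sqnorm y.
Proof.
move=> t0; rewrite sqnormD; have := sqnorm_ge0 ((t%:C)%C *: x - y).
rewrite sqnormD sqnormZ sqnormN innerNr ReN innerZl conj_real Re_realM.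
have tt : t * t^-1 = 1 by rewrite mulfV ?gt_eqF.
move: (sqnorm_ge0 x) (sqnorm_ge0 y) (complex.Re << x, y >>) => Qx Qy r Hr.
nra.
Qed.

End InnerProduct.

Lemma eventually_inv_lt (R : realType) (e : R) : 0 < e ->
  exists N, forall n, (N <= n)%N -> (n.+1%:R : R)^-1 < e.
Proof.
move=> e0; exists (Num.bound e^-1) => n leNn.
have : 0 <= e^-1 by rewrite invr_ge0 ltW.
move/archi_boundP => bound_gt; rewrite -(ler_nat R) in leNn.
rewrite -[e in _ < e]invrK ltf_pV2 ?posrE ?invr_gt0 ?ltr0Sn // -natr1; lra.
Qed.

Section Convergence.
Variables (R : realType) (V : lmodType R[i]) (H : hilbert V).
Local Notation sqnorm := (sqnorm H).

Lemma converges_sqnorm (u : nat -> V) l : converges H u l ->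
  forall e, 0 < e -> exists N, forall n, (N <= n)%N -> sqnorm (u n - l) < e.
Proof.
move=> ul e e0; have [|N hN] := ul (Num.sqrt e); first by rewrite sqrtr_gt0.
by exists N => n /hN; rewrite ltr_sqrt.
Qed.

Lemma sqnorm_cauchy_converges (u : nat -> V) :
  (forall e, 0 < e -> exists N, forall m n, (N <= m)%N -> (N <= n)%N ->
     sqnorm (u m - u n) < e) ->
  exists l, converges H u l.
Proof.
move=> cauchy; apply: inner_complete => e e0.
have [N hN] := cauchy _ (exprn_gt0 2 e0).
exists N => m n hm hn; have := hN m n hm hn.
by rewrite -ltr_sqrt ?exprn_gt0 // sqrtr_sqr gtr0_norm.
Qed.

Lemma sqnorm_limit_le (u : nat -> V) (phi l : V) (d : R) : 0 <= d ->
  (forall n, sqnorm (phi - u n) < d + (n.+1%:R)^-1) -> converges H u l ->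
  sqnorm (phi - l) <= d.
Proof.
move=> d0 hu ul; apply/ler_addgt0Pr => e e0.
pose t : R := e / (2 * (d + 1)).
have t0 : 0 < t by rewrite divr_gt0 // mulr_gt0 // ltr_pwDr.
have td : t * (d + 1) = e / 2.
  by rewrite /t mulrAC -mulf_div divff ?mulr1 // gt_eqF // ltr_pwDr.
pose a : R := 1 + t; pose b : R := 1 + t^-1.
have a0 : 0 < a by rewrite ltr_pwDr.
have b0 : 0 < b by rewrite ltr_pwDr ?invr_gt0.
have e4 : 0 < e / 4 by rewrite divr_gt0.
have [|N1 hN1] := eventually_inv_lt (e := a^-1 * (e / 4)).
  by rewrite mulr_gt0 ?invr_gt0.
have [|N2 hN2] := converges_sqnorm ul (e := b^-1 * (e / 4)).
  by rewrite mulr_gt0 ?invr_gt0.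
pose n := maxn N1 N2.
have := hN1 n (leq_maxl _ _); rewrite ltr_pdivlMl // => small_inv.
have := hN2 n (leq_maxr _ _); rewrite ltr_pdivlMl // => small_tail.
have split_le : sqnorm (phi - l) <= a * sqnorm (phi - u n) + b * sqnorm (u n - l).
  by have := sqnormD_le H (phi - u n) (u n - l) t0; rewrite addrA subrK.
have close : a * sqnorm (phi - u n) <= a * (d + n.+1%:R^-1) by rewrite ler_pM2l // ltW.
have expand : a * (d + n.+1%:R^-1) = d + t * (d + 1) - t + a * n.+1%:R^-1.
  by rewrite /a; ring.
set r := (n.+1%:R^-1 : R) in small_inv close expand; clearbody r; lra.
Qed.

End Convergence.

Lemma quadratic_ge0_linear_eq0 (R : realFieldType) (a b : R) : 0 <= a ->
  (forall t, 0 <= t ^+ 2 * a - t * b) -> b = 0.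
Proof.
move=> a0 nonneg; pose t := b / (a + 1).
have tb : t * (a + 1) = b by rewrite /t divfK // gt_eqF // ltr_pwDr.
have := nonneg t; rewrite -tb; clearbody t => h.
have t0 : t = 0 by nra.
by rewrite t0 mul0r.
Qed.

Section Subspace.
Variables (R : realType) (V : lmodType R[i]) (H : hilbert V) (S : csub H).
Local Notation "<< x , y >>" := (inner H x y).
Local Notation sqnorm := (sqnorm H).
Local Notation inS := (cs_set S).
Implicit Types x y s : V.

Lemma csubD x y : inS x -> inS y -> inS (x + y).
Proof. by move=> Sx Sy; have := cs_lin 1 Sx Sy; rewrite scale1r. Qed.

Lemma csubZ a x : inS x -> inS (a *: x).
Proof. by move=> Sx; have := cs_lin a Sx (cs_0 S); rewrite addr0. Qed.

Lemma csubB x y : inS x -> inS y -> inS (x - y).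
Proof. by move=> Sx Sy; rewrite -scaleN1r; apply/csubD/csubZ. Qed.

Section Minimizer.
Variable phi : V.

Definition sqdists (q : R) : Prop := exists2 s, inS s & q = sqnorm (phi - s).

Definition sqdist : R := inf sqdists.

Lemma sqdists_nonempty : exists q, sqdists q.
Proof. by exists (sqnorm (phi - 0)), 0 => //; apply: cs_0. Qed.

Lemma sqdists_lb0 q : sqdists q -> 0 <= q.
Proof. by move=> [s _ ->]; apply: sqnorm_ge0. Qed.

Lemma sqdist_le s : inS s -> sqdist <= sqnorm (phi - s).
Proof.
move=> Ss; apply: (ge_inf (E := sqdists)); last by exists s.
by exists 0; apply: sqdists_lb0.
Qed.

Lemma sqdist_ge0 : 0 <= sqdist.
Proof. exact: lb_le_inf sqdists_nonempty sqdists_lb0. Qed.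

Lemma sqdist_approx e : 0 < e -> exists2 s, inS s & sqnorm (phi - s) < sqdist + e.
Proof.
move=> e0; have [|_ [s Ss ->] close] := inf_adherent e0 (E := sqdists).
  by split; [exact: sqdists_nonempty | exists 0; apply: sqdists_lb0].
by exists s.
Qed.

Lemma near_minimizers_close x y : inS x -> inS y ->
  sqnorm (x - y) <= 2 * (sqnorm (phi - x) - sqdist) + 2 * (sqnorm (phi - y) - sqdist).
Proof.
move=> Sx Sy; pose m : V := (2^-1 : R[i]) *: (x + y).
have Sm : inS m by apply/csubZ/csubD.
have two_mid : (phi - y) + (phi - x) = ((2 : R)%:C)%C *: (phi - m).
  rewrite scalerBr scalerA rmorph_nat mulfV ?pnatr_eq0 // scale1r.
  by rewrite scaler_nat mulr2n opprD addrACA (addrC (- y)).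
have diff : (phi - y) - (phi - x) = x - y by rewrite opprB addrC addrA subrK.
have := sqnorm_parallelogram H (phi - y) (phi - x); rewrite two_mid diff sqnormZ.
have := sqdist_le Sm; lra.
Qed.

Lemma minimizer_exists :
  exists2 l, inS l & forall s, inS s -> sqnorm (phi - l) <= sqnorm (phi - s).
Proof.
have /choice[u hu] : forall n : nat,
    exists s, inS s /\ sqnorm (phi - s) < sqdist + n.+1%:R^-1.
  move=> n; have [|s Ss] := sqdist_approx (e := n.+1%:R^-1); last by exists s.
  by rewrite invr_gt0 ltr0Sn.
have cauchy e : 0 < e ->
    exists N, forall m n, (N <= m)%N -> (N <= n)%N -> sqnorm (u m - u n) < e.
  move=> e0; have [|N hN] := eventually_inv_lt (e := e / 4); first by rewrite divr_gt0.
  exists N => m n leNm leNn.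
  have near k : (N <= k)%N -> sqnorm (phi - u k) < sqdist + e / 4.
    by move=> /hN small; apply: lt_trans (hu k).2 _; rewrite ltrD2l.
  have := near_minimizers_close (hu m).1 (hu n).1.
  have := near m leNm; have := near n leNn; lra.
have [l ul] := sqnorm_cauchy_converges cauchy.
exists l => [|s Ss]; first exact: cs_closed (fun n => (hu n).1) ul.
exact: le_trans (sqnorm_limit_le sqdist_ge0 (fun n => (hu n).2) ul) (sqdist_le Ss).
Qed.

Lemma minimizer_orthogonal l : inS l ->
  (forall s, inS s -> sqnorm (phi - l) <= sqnorm (phi - s)) ->
  forall s, inS s -> << s, phi - l >> = 0.
Proof.
move=> Sl lmin.
(* Vary l along real multiples of s for the real part, then use 'i s. *)
have Re0 s : inS s -> complex.Re << phi - l, s >> = 0.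
  move=> Ss; suff : 2 * complex.Re << phi - l, s >> = 0 by lra.
  apply: (quadratic_ge0_linear_eq0 (sqnorm_ge0 H s)) => t.
  have := lmin _ (csubD Sl (csubZ ((t%:C)%C) Ss)).
  have -> : phi - (l + (t%:C)%C *: s) = (phi - l) + ((- t)%:C)%C *: s.
    by rewrite opprD addrA rmorphN scaleNr.
  by rewrite [sqnorm (_ + _ *: _)]sqnormD sqnormZ sqrrN innerZr Re_realM; lra.
move=> s Ss; have := Re0 _ (csubZ 'i%C Ss); rewrite innerZr Re_iM => Im0.
by rewrite inner_conj (complex_eq0 (Re0 _ Ss)) ?rmorph0 // -[0]oppr0 -Im0 opprK.
Qed.

End Minimizer.

Lemma proj_spec phi :
  inS (proj S phi) /\ forall s, inS s -> << s, phi - proj S phi >> = 0.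
Proof.
apply: (epsilon_spec (inhabits 0) (fun p => inS p /\ _)).
have [l Sl lmin] := minimizer_exists phi.
by exists l; split => //; apply: minimizer_orthogonal.
Qed.

Lemma sqnorm_proj phi :
  sqnorm phi = sqnorm (proj S phi) + sqnorm (phi - proj S phi).
Proof.
have [Sp orth] := proj_spec phi.
rewrite -[in LHS](subrK (proj S phi) phi) [LHS]sqnormD Re_inner_sym orth //.
by rewrite mulr0 addr0 addrC.
Qed.

Lemma proj_id phi : inS phi -> proj S phi = phi.
Proof.
move=> Sphi; have [Sp orth] := proj_spec phi.
have /(@inner_eq0 _ _ H)/eqP : << phi - proj S phi, phi - proj S phi >> = 0.
  by apply: orth; apply: csubB.
by rewrite subr_eq0 => /eqP.
Qed.

Lemma mem_csub_sqnorm_proj phi : inS phi <-> sqnorm (proj S phi) = sqnorm phi.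
Proof.
split=> [/proj_id -> // | eqQ].
have /sqnorm_eq0/eqP : sqnorm (phi - proj S phi) = 0.
  have := sqnorm_proj phi; rewrite eqQ => /eqP.
  by rewrite addrC -subr_eq subrr eq_sym => /eqP.
by rewrite subr_eq0 => /eqP ->; case: (proj_spec phi).
Qed.

End Subspace.

Section Rays.
Variables (R : realType) (V : lmodType R[i]) (H : hilbert V).

Definition ray_rep (r : ray V) : V :=
  epsilon (inhabits 0) (fun v => v <> 0 /\ ray_set r v).

Lemma ray_rep_spec r : ray_rep r <> 0 /\ ray_set r (ray_rep r).
Proof.
apply: (epsilon_spec (inhabits 0) (fun v => v <> 0 /\ ray_set r v)).
have [psi [psi0 rpsi]] := ray_gen r.
by exists psi; split => //; apply/rpsi; exists 1; rewrite scale1r.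
Qed.

Lemma ray_sub_csub_rep r (S : csub H) :
  (forall v, ray_set r v -> cs_set S v) <-> cs_set S (ray_rep r).
Proof.
have [rep0 rep_r] := ray_rep_spec r; split=> [|S_rep v]; first exact.
have [psi [_ rpsi]] := ray_gen r; move=> /rpsi[k ->].
have [c rep_psi] := (rpsi _).1 rep_r.
have c0 : c != 0 by apply/eqP => c0; apply: rep0; rewrite rep_psi c0 scale0r.
have -> : k *: psi = (k / c) *: ray_rep r by rewrite rep_psi scalerA divfK.
exact: csubZ.
Qed.

Lemma ray_sub_csub_ebar r (S : csub H) :
  (forall v, ray_set r v -> cs_set S v) <-> ebar r S = 1.
Proof.
rewrite ray_sub_csub_rep mem_csub_sqnorm_proj /ebar -/(ray_rep r) !normH_sqr.
have [rep0 _] := ray_rep_spec r.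
have Q0 : sqnorm H (ray_rep r) != 0 by apply/eqP => /sqnorm_eq0.
by split=> [-> | eq1]; [rewrite mulfV | rewrite -(divfK Q0 (sqnorm _ _)) eq1 mul1r].
Qed.

End Rays.

Theorem proposition3p4 (R : realType) (V W : lmodType R[i])
    (H : hilbert V) (K : hilbert W) (f : chu_morph H K)
    (psi : V) (hpsi : psi <> 0) (S : csub K) :
  (forall v, ray_set (ray_of hpsi) v -> cs_set (f_upper f S) v) <->
  (forall w, ray_set (f_lower f (ray_of hpsi)) w -> cs_set S w).
Proof. by rewrite !ray_sub_csub_ebar chu_adj. Qed.
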